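(* For non-negative integers $n,p$ define \begin{multline*} h(n,p)=\frac{4p^2+2p}{n+2p+1}+4p-2+(4p^2+4np+2n+6p+2)2^{1-n}+2^{1-2p}-(4p^2+2np+2n+6p+2)2^{1-n-2p}\\ +2^{1-n-2p}\sum_{i=1}^{p} i\Big\{2\binom{n+2p+3}{n+2i+1}-\binom{n+2p+3}{n+2i+2}-(2n+4p+4)\binom{2p+3}{2i+1}\Big\}\\ +2^{2-n}\sum_{i=1}^{p}\sum_{k=2i-1}^{2p} i\,2^{-k}\Big\{\frac{n+2p}{n+2p+1}\binom{n+k+2}{n+2i+1}-\binom{n+k+2}{n+2i}+\binom{k+3}{2i+1}\Big\}\\ +2^{1-2p}\sum_{i=1}^{p}\sum_{k=1}^{n} i\,2^{-k}\Big\{\binom{k+2p+3}{k+2i+2}-\frac{2n+4p+4}{n+2p+1}\binom{k+2p+2}{k+2i+1}\Big\}. \end{multline*} Then $h(n,p)=0$ for all integers $n,p\ge0$.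
   Context: $\binom{a}{b}=\frac{a!}{b!(a-b)!}$ for integers $0\le b\le a$. A sum with no terms equals $0$. *)

From HB Require Import structures.
From mathcomp Require Import all_boot all_order all_algebra.
Set Implicit Arguments. Unset Strict Implicit. Unset Printing Implicit Defensive.
Import Order.TTheory GRing.Theory Num.Theory.
Local Open Scope ring_scope.

Definition pow2 (z : int) : rat := (2%:R : rat) ^ z.

Definition binq (a b : nat) : rat := ('C(a, b))%:R.

Definition h (n p : nat) : rat :=
  let N : rat := n%:R in
  let P : rat := p%:R in
  (4 * P ^+ 2 + 2 * P) / (N + 2 * P + 1) + 4 * P - 2
  + (4 * P ^+ 2 + 4 * N * P + 2 * N + 6 * P + 2) * pow2 (1 - n%:Z)
  + pow2 (1 - (2 * p)%:Z)
  - (4 * P ^+ 2 + 2 * N * P + 2 * N + 6 * P + 2) * pow2 (1 - n%:Z - (2 * p)%:Z)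
  + pow2 (1 - n%:Z - (2 * p)%:Z) *
      \sum_(1 <= i < p.+1)
        i%:R * (2 * binq (n + 2 * p + 3) (n + 2 * i + 1)
                - binq (n + 2 * p + 3) (n + 2 * i + 2)
                - (2 * N + 4 * P + 4) * binq (2 * p + 3) (2 * i + 1))
  + pow2 (2 - n%:Z) *
      \sum_(1 <= i < p.+1) \sum_(2 * i - 1 <= k < (2 * p).+1)
        i%:R * pow2 (- k%:Z) *
          ((N + 2 * P) / (N + 2 * P + 1) * binq (n + k + 2) (n + 2 * i + 1)
           - binq (n + k + 2) (n + 2 * i)
           + binq (k + 3) (2 * i + 1))
  + pow2 (1 - (2 * p)%:Z) *
      \sum_(1 <= i < p.+1) \sum_(1 <= k < n.+1)
        i%:R * pow2 (- k%:Z) *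
          (binq (k + 2 * p + 3) (k + 2 * i + 2)
           - (2 * N + 4 * P + 4) / (N + 2 * P + 1) * binq (k + 2 * p + 2) (k + 2 * i + 1)).

From mathcomp Require Import all_boot all_order all_algebra.
From mathcomp Require Import ring lra zify.
Set Implicit Arguments. Unset Strict Implicit. Unset Printing Implicit Defensive.
Import Order.TTheory GRing.Theory Num.Theory.
Local Open Scope ring_scope.

(* The main tool is the tail of a row of Pascal's triangle,
   [btail R m = \sum_(d >= 0) 'C(R, m + d)].  It satisfies
   [btail R m = 'C(R, m) + btail R m.+1] and the Pascal rule
   [btail R.+1 m.+1 = btail R m.+1 + btail R m]; combining the two, sums of
   binomial coefficients weighted by [2^-k] along a column or a diagonal of
   Pascal's triangle telescope into closed forms in [btail].

   1. These closed forms evaluate the two inner sums over [k] in [h].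
   2. A second use of the Pascal rule turns the [i]-th summands of the three
      sums of [h] into [i] times a fixed combination of 'C(2p+3, 2i+1),
      'C(2p+3, 2i+2) and [btail (2p+3) (2i+2)].
   3. The three resulting sums over [i] are computed by pairing the indices
      [d = 2l] and [d = 2l+1] of row [2p+3], which reduces them to the
      moments [\sum_d d^j 'C(Q, d)] (j <= 2) and the alternating moments
      [\sum_d (-1)^d d^j 'C(Q, d)] (j <= 1); the tail sum first needs an
      Abel summation.
   4. What remains is a rational-function identity in [n], [p], [2^n] and
      [2^2p], closed by [field]. *)

Lemma sum_from_diff (V : zmodType) (f : nat -> V) a c b : (a <= c <= b)%N ->
  \sum_(c <= k < b) f k = \sum_(a <= k < b) f k - \sum_(a <= k < c) f k.
Proof. by move=> /andP[ac cb]; rewrite (big_cat_nat ac cb) /= addrC addrK. Qed.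

Lemma sum_from1 (V : zmodType) (G : nat -> V) p :
  \sum_(1 <= i < p.+1) G i = \sum_(0 <= i < p.+2) G i - G 0%N - G p.+1.
Proof.
rewrite (big_nat_recr p.+1) //= (@big_ltn _ _ _ 0 p.+1) //=.
by rewrite [_ - G 0%N]addrAC addrK [G 0%N + _]addrC addrK.
Qed.

Lemma sum_from1_shift (V : zmodType) (G H : nat -> V) p :
  (forall l, H l.+2 = G l.+1) ->
  \sum_(1 <= i < p.+1) G i = \sum_(0 <= l < p.+2) H l - H 0%N - H 1%N.
Proof.
move=> HG; rewrite big_add1 /= [in RHS]big_nat_recl // [in RHS]big_nat_recl //.
under [in RHS]eq_bigr => l _ do rewrite HG.
by rewrite [H 0%N + _]addrC addrK [H 1%N + _]addrC addrK.
Qed.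

Lemma sum_by_pairs (V : nmodType) (F H : nat -> V) m :
  (forall l, F (2 * l)%N + F (2 * l).+1 = H l) ->
  \sum_(0 <= l < m) H l = \sum_(0 <= d < 2 * m) F d.
Proof.
move=> FH; elim: m => [|m IH]; first by rewrite muln0 !big_geq.
have -> : (2 * m.+1 = (2 * m).+2)%N by lia.
by rewrite !big_nat_recr //= IH -FH addrA.
Qed.

(* Abel summation against the weights [i], whose partial sums are [i(i+1)/2]. *)
Lemma abel_summation (F : fieldType) (s : nat -> F) m : (2 : F) != 0 ->
  \sum_(1 <= i < m.+1) i%:R * s i
  = \sum_(1 <= i < m.+1) (i%:R * (i%:R + 1) / 2) * (s i - s i.+1)
    + m%:R * (m%:R + 1) / 2 * s m.+1.
Proof.
move=> two_neq0; elim: m => [|m IH]; first by rewrite !big_geq // mulr0n !mul0r add0r.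
rewrite (big_nat_recr m.+1) //= IH (big_nat_recr m.+1) //= -[(m.+1)%:R]natr1.
by field.
Qed.

(* Normal forms of the powers of two occurring in [h], as products of inverses
   of natural powers of two, which [field] can handle. *)
Lemma pow2N k : pow2 (- k%:Z) = ((2 : rat) ^+ k)^-1.
Proof. by rewrite /pow2 -exprnN. Qed.

Lemma exp2_neq0 k : (2 : rat) ^+ k != 0.
Proof. by rewrite expf_neq0. Qed.

Lemma pow2_1a a : pow2 (1 - a%:Z) = 2 * (2 ^+ a)^-1.
Proof. by rewrite /pow2 expfzDr // expr1z -exprnN. Qed.

Lemma pow2_2a a : pow2 (2 - a%:Z) = 4 * (2 ^+ a)^-1.
Proof.
rewrite /pow2 -[2 - _]/(1 + 1 - a%:Z) !expfzDr // expr1z -exprnN.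
by congr (_ * _); lra.
Qed.

Lemma pow2_1ab a b : pow2 (1 - a%:Z - b%:Z) = 2 * ((2 ^+ a)^-1 * (2 ^+ b)^-1).
Proof. by rewrite /pow2 !expfzDr // expr1z -!exprnN mulrA. Qed.

Lemma denom_neq0 n p : (n%:R + 2 * p%:R + 1 : rat) != 0.
Proof. apply: lt0r_neq0; have := ler0n rat n; have := ler0n rat p; lra. Qed.

Lemma binqS a b : binq a.+1 b.+1 = binq a b.+1 + binq a b.
Proof. by rewrite /binq binS natrD. Qed.

Lemma binq_small a b : (a < b)%N -> binq a b = 0.
Proof. by move=> ab; rewrite /binq bin_small. Qed.

Definition btail (R m : nat) : rat := \sum_(0 <= d < R.+1) binq R (m + d).

Lemma btail_split R m : btail R m = binq R m + btail R m.+1.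
Proof.
rewrite /btail big_nat_recl // addn0 [in RHS](big_nat_recr R) //=.
rewrite [binq R (m.+1 + R)]binq_small ?addr0; last by lia.
by congr (_ + _); apply: eq_bigr => d _; rewrite addnS addSn.
Qed.

(* Pascal's rule, summed along the row. *)
Lemma btail_pascal R m : btail R.+1 m.+1 = btail R m.+1 + btail R m.
Proof.
rewrite /btail.
transitivity (\sum_(0 <= d < R.+2) (binq R (m.+1 + d) + binq R (m + d))).
  by apply: eq_bigr => d _; rewrite addSn binqS -addSn.
rewrite big_split /= !(big_nat_recr R.+1) //=.
by rewrite (@binq_small R (m.+1 + R.+1)) ?(@binq_small R (m + R.+1)) ?addr0 //; lia.
Qed.

Lemma btail_gt R m : (R < m)%N -> btail R m = 0.
Proof.
move=> Rm; rewrite /btail big1 // => d _; apply: binq_small.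
exact: leq_trans Rm (leq_addr _ _).
Qed.

Lemma btail_diag R : btail R R = 1.
Proof. by rewrite btail_split btail_gt // addr0 /binq binn. Qed.

(* Forms of [btail_split] and [btail_pascal] with the indices determined up to
   arithmetic, for rewriting at indices such as [2 * i + 2]. *)
Lemma btail_splitE R m m' : m' = m.+1 -> btail R m = binq R m + btail R m'.
Proof. by move=> ->; apply: btail_split. Qed.

Lemma btail_pascalE R R' m m' : R' = R.+1 -> m' = m.+1 ->
  btail R' m' = btail R m' + btail R m.
Proof. by move=> -> ->; apply: btail_pascal. Qed.

Lemma geom_sum_column a b m :
  \sum_(0 <= k < m.+1) pow2 (- k%:Z) * binq (k + a) b
  = pow2 (- m%:Z) * btail (m + a).+1 b.+1 - 2 * btail a b.+1.
Proof.
elim: m => [|m IH].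
  rewrite big_nat1 pow2N expr0 invr1 !mul1r add0n btail_pascal (btail_split a b).
  ring.
rewrite big_nat_recr //= IH !pow2N addSn.
rewrite (btail_pascal (m + a).+1 b) (btail_split (m + a).+1 b) exprS.
have pow_neq0 := exp2_neq0 m.
by field.
Qed.

Lemma geom_sum_diagonal a c m :
  \sum_(0 <= k < m.+1) pow2 (- k%:Z) * binq (k + a) (k + c)
  = 2 * btail a c - pow2 (- m%:Z) * btail (m + a).+1 (m + c).+1.
Proof.
elim: m => [|m IH].
  rewrite big_nat1 pow2N expr0 invr1 !mul1r !add0n btail_pascal (btail_split a c).
  ring.
rewrite big_nat_recr //= IH !pow2N !addSn.
rewrite (btail_pascal (m + a).+1 (m + c).+1) (btail_split (m + a).+1 (m + c).+1) exprS.
have pow_neq0 := exp2_neq0 m.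
by field.
Qed.

(* Rewriting forms of the two telescoping sums, with the indices of the
   right-hand side determined up to arithmetic. *)
Lemma geom_sum_columnE a b m R B : R = (m + a).+1 -> B = b.+1 ->
  \sum_(0 <= k < m.+1) pow2 (- k%:Z) * binq (k + a) b
  = pow2 (- m%:Z) * btail R B - 2 * btail a B.
Proof. by move=> -> ->; apply: geom_sum_column. Qed.

Lemma geom_sum_diagonalE a c m R C : R = (m + a).+1 -> C = (m + c).+1 ->
  \sum_(0 <= k < m.+1) pow2 (- k%:Z) * binq (k + a) (k + c)
  = 2 * btail a c - pow2 (- m%:Z) * btail R C.
Proof. by move=> -> ->; apply: geom_sum_diagonal. Qed.

(* Inner sum of the first double sum of [h], over [2i - 1 <= k <= 2p], for an
   arbitrary coefficient [c] in place of [(n + 2p) / (n + 2p + 1)]. *)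
Lemma inner_sum_to_2p n p i (c : rat) : (1 <= i <= p)%N ->
  \sum_(2 * i - 1 <= k < (2 * p).+1) i%:R * pow2 (- k%:Z) *
     (c * binq (n + k + 2) (n + 2 * i + 1) - binq (n + k + 2) (n + 2 * i)
      + binq (k + 3) (2 * i + 1))
  = i%:R * (pow2 (- (2 * p)%:Z) * (c * btail (n + 2 * p + 3) (n + 2 * i + 2)
      - btail (n + 2 * p + 3) (n + 2 * i + 1) + btail (2 * p + 4) (2 * i + 2))).
Proof.
move=> /andP[i_ge1 i_le_p].
have range : (0 <= 2 * i - 1 <= (2 * p).+1)%N by lia.
transitivity (i%:R * (
    c * \sum_(2 * i - 1 <= k < (2 * p).+1)
           pow2 (- k%:Z) * binq (k + (n + 2)) (n + 2 * i + 1)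
  - \sum_(2 * i - 1 <= k < (2 * p).+1) pow2 (- k%:Z) * binq (k + (n + 2)) (n + 2 * i)
  + \sum_(2 * i - 1 <= k < (2 * p).+1) pow2 (- k%:Z) * binq (k + 3) (2 * i + 1))).
  rewrite (big_distrr c) -sumrB -big_split /= big_distrr /=.
  apply: eq_bigr => k _; rewrite [(n + k + 2)%N]addnAC addnC; ring.
rewrite !(sum_from_diff _ range).
have -> : (2 * i - 1 = (2 * i - 2).+1)%N by lia.
rewrite (@geom_sum_columnE _ _ _ (n + 2 * p + 3) (n + 2 * i + 2)); try lia.
rewrite (@geom_sum_columnE _ _ _ (n + 2 * i + 1) (n + 2 * i + 2)); try lia.
rewrite (@geom_sum_columnE _ _ _ (n + 2 * p + 3) (n + 2 * i + 1)); try lia.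
rewrite (@geom_sum_columnE _ _ _ (n + 2 * i + 1) (n + 2 * i + 1)); try lia.
rewrite (@geom_sum_columnE _ _ _ (2 * p + 4) (2 * i + 2)); try lia.
rewrite (@geom_sum_columnE _ _ _ (2 * i + 2) (2 * i + 2)); try lia.
rewrite !btail_diag !(@btail_gt (n + 2 * i + 1)) ?(@btail_gt (n + 2)) ?(@btail_gt 3) //;
  try lia.
ring.
Qed.

(* Inner sum of the second double sum of [h], over [1 <= k <= n], for an
   arbitrary coefficient [c] in place of [(2n + 4p + 4) / (n + 2p + 1)]. *)
Lemma inner_sum_to_n n p i (c : rat) :
  \sum_(1 <= k < n.+1) i%:R * pow2 (- k%:Z) *
     (binq (k + 2 * p + 3) (k + 2 * i + 2) - c * binq (k + 2 * p + 2) (k + 2 * i + 1))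
  = i%:R * ((2 * btail (2 * p + 3) (2 * i + 2)
             - pow2 (- n%:Z) * btail (n + 2 * p + 4) (n + 2 * i + 3)
             - binq (2 * p + 3) (2 * i + 2))
           - c * (2 * btail (2 * p + 2) (2 * i + 1)
             - pow2 (- n%:Z) * btail (n + 2 * p + 3) (n + 2 * i + 2)
             - binq (2 * p + 2) (2 * i + 1))).
Proof.
transitivity (i%:R * (
    \sum_(1 <= k < n.+1) pow2 (- k%:Z) * binq (k + (2 * p + 3)) (k + (2 * i + 2))
  - c * \sum_(1 <= k < n.+1) pow2 (- k%:Z) * binq (k + (2 * p + 2)) (k + (2 * i + 1)))).
  rewrite (big_distrr c) -sumrB /= big_distrr /=.
  by apply: eq_bigr => k _; rewrite !addnA; ring.
have range : (0 <= 1 <= n.+1)%N by [].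
rewrite !(sum_from_diff _ range) !big_nat1.
rewrite (@geom_sum_diagonalE _ _ _ (n + 2 * p + 4) (n + 2 * i + 3)); try lia.
rewrite (@geom_sum_diagonalE _ _ _ (n + 2 * p + 3) (n + 2 * i + 2)); try lia.
rewrite (pow2N 0) expr0 invr1 !mul1r !add0n.
ring.
Qed.

Lemma summand_to_row n p i :
  let N : rat := n%:R in let P : rat := p%:R in
  pow2 (1 - n%:Z - (2 * p)%:Z) *
    (i%:R * (2 * binq (n + 2 * p + 3) (n + 2 * i + 1)
             - binq (n + 2 * p + 3) (n + 2 * i + 2)
             - (2 * N + 4 * P + 4) * binq (2 * p + 3) (2 * i + 1)))
  + pow2 (2 - n%:Z) *
    (i%:R * (pow2 (- (2 * p)%:Z) *
       ((N + 2 * P) / (N + 2 * P + 1) * btail (n + 2 * p + 3) (n + 2 * i + 2)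
        - btail (n + 2 * p + 3) (n + 2 * i + 1) + btail (2 * p + 4) (2 * i + 2))))
  + pow2 (1 - (2 * p)%:Z) *
    (i%:R * ((2 * btail (2 * p + 3) (2 * i + 2)
              - pow2 (- n%:Z) * btail (n + 2 * p + 4) (n + 2 * i + 3)
              - binq (2 * p + 3) (2 * i + 2))
            - (2 * N + 4 * P + 4) / (N + 2 * P + 1) *
              (2 * btail (2 * p + 2) (2 * i + 1)
               - pow2 (- n%:Z) * btail (n + 2 * p + 3) (n + 2 * i + 2)
               - binq (2 * p + 2) (2 * i + 1))))
  = - 2 * pow2 (1 - n%:Z - (2 * p)%:Z) * (N + 2 * P + 1) *
      (i%:R * binq (2 * p + 3) (2 * i + 1))
    + (4 * pow2 (1 - n%:Z - (2 * p)%:Z) - 2 * pow2 (1 - (2 * p)%:Z) / (N + 2 * P + 1)) *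
      (i%:R * btail (2 * p + 3) (2 * i + 2))
    + (- pow2 (1 - (2 * p)%:Z)) * (i%:R * binq (2 * p + 3) (2 * i + 2)).
Proof.
move=> N P.
(* One step of [btail_split] or [btail_pascal] each; afterwards both sides are
   combinations of the tails of rows [n+2p+3] and [2p+2] and of coefficients
   of rows [2p+2] and [2p+3], and agree as rational functions. *)
have b1 : binq (n + 2 * p + 3) (n + 2 * i + 1)
    = btail (n + 2 * p + 3) (n + 2 * i + 1) - btail (n + 2 * p + 3) (n + 2 * i + 2).
  by rewrite (@btail_splitE _ _ (n + 2 * i + 2)) ?addrK //; lia.
have b2 : binq (n + 2 * p + 3) (n + 2 * i + 2)
    = btail (n + 2 * p + 3) (n + 2 * i + 2) - btail (n + 2 * p + 3) (n + 2 * i + 3).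
  by rewrite (@btail_splitE _ _ (n + 2 * i + 3)) ?addrK //; lia.
have t1 : btail (n + 2 * p + 4) (n + 2 * i + 3)
    = btail (n + 2 * p + 3) (n + 2 * i + 3) + btail (n + 2 * p + 3) (n + 2 * i + 2).
  by apply: btail_pascalE; lia.
have t2 : btail (2 * p + 4) (2 * i + 2)
    = btail (2 * p + 3) (2 * i + 2) + btail (2 * p + 3) (2 * i + 1).
  by apply: btail_pascalE; lia.
have t3 : btail (2 * p + 3) (2 * i + 1)
    = binq (2 * p + 3) (2 * i + 1) + btail (2 * p + 3) (2 * i + 2).
  by apply: btail_splitE; lia.
have t4 : btail (2 * p + 3) (2 * i + 2)
    = btail (2 * p + 2) (2 * i + 2) + btail (2 * p + 2) (2 * i + 1).
  by apply: btail_pascalE; lia.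
have t5 : btail (2 * p + 2) (2 * i + 1)
    = binq (2 * p + 2) (2 * i + 1) + btail (2 * p + 2) (2 * i + 2).
  by apply: btail_splitE; lia.
rewrite b1 b2 t1 t2 t3 t4 t5 pow2_1ab pow2_2a pow2_1a !pow2N.
have := exp2_neq0 n; have := exp2_neq0 (2 * p); have := denom_neq0 n p.
by move=> M_neq0 E_neq0 F_neq0; field; rewrite M_neq0 E_neq0 F_neq0.
Qed.

Lemma sum_binq_succ (f : nat -> rat) Q :
  \sum_(0 <= d < Q.+2) f d * binq Q.+1 d
  = \sum_(0 <= d < Q.+1) f d * binq Q d + \sum_(0 <= d < Q.+1) f d.+1 * binq Q d.
Proof.
rewrite big_nat_recl // /binq bin0.
under eq_bigr => d _ do rewrite binS natrD mulrDr.
rewrite big_split /= addrA; congr (_ + _).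
by rewrite [in RHS]big_nat_recl // bin0 (big_nat_recr Q) //= bin_small // mulr0 addr0.
Qed.

Definition moment (k Q : nat) : rat := \sum_(0 <= d < Q.+1) d%:R ^+ k * binq Q d.
Definition alt_moment (k Q : nat) : rat :=
  \sum_(0 <= d < Q.+1) (-1) ^+ d * d%:R ^+ k * binq Q d.

Lemma moment_closed Q :
  [/\ moment 0 Q = 2 ^+ Q, moment 1 Q = Q%:R * 2 ^+ Q / 2
    & moment 2 Q = Q%:R * (Q%:R + 1) * 2 ^+ Q / 4].
Proof.
elim: Q => [|Q [IH0 IH1 IH2]].
  by rewrite /moment !big_nat1 /binq bin0 !expr0; split; field.
have e0 : moment 0 Q.+1 = moment 0 Q + moment 0 Q.
  by rewrite /moment sum_binq_succ; congr (_ + _); apply: eq_bigr => d _; rewrite !expr0.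
have e1 : moment 1 Q.+1 = moment 1 Q + moment 1 Q + moment 0 Q.
  rewrite /moment sum_binq_succ -addrA; congr (_ + _).
  by rewrite -big_split /=; apply: eq_bigr => d _; rewrite -natr1; ring.
have e2 : moment 2 Q.+1 = moment 2 Q + moment 2 Q + 2 * moment 1 Q + moment 0 Q.
  rewrite /moment sum_binq_succ -!addrA; congr (_ + _).
  by rewrite big_distrr -!big_split /=; apply: eq_bigr => d _; rewrite -natr1; ring.
by rewrite e0 e1 e2 IH0 IH1 IH2 -natr1 exprS; split; field.
Qed.

Lemma alt_moment0 Q : alt_moment 0 Q.+1 = 0.
Proof.
rewrite /alt_moment sum_binq_succ.
have -> : \sum_(0 <= d < Q.+1) (-1) ^+ d.+1 * d.+1%:R ^+ 0 * binq Q d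
          = - \sum_(0 <= d < Q.+1) (-1) ^+ d * d%:R ^+ 0 * binq Q d.
  by rewrite -sumrN; apply: eq_bigr => d _; rewrite exprS !expr0; ring.
by rewrite subrr.
Qed.

Lemma alt_moment1 Q : alt_moment 1 Q.+2 = 0.
Proof.
have alt0 := alt_moment0 Q; rewrite /alt_moment in alt0 *; rewrite sum_binq_succ.
have -> : \sum_(0 <= d < Q.+2) (-1) ^+ d.+1 * d.+1%:R ^+ 1 * binq Q.+1 d
   = - (\sum_(0 <= d < Q.+2) (-1) ^+ d * d%:R ^+ 1 * binq Q.+1 d
        + \sum_(0 <= d < Q.+2) (-1) ^+ d * d%:R ^+ 0 * binq Q.+1 d).
  by rewrite -big_split -sumrN /=; apply: eq_bigr => d _; rewrite -natr1 exprS; ring.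
by rewrite alt0 addr0 subrr.
Qed.

Lemma sum_quadratic_binq Q (a0 a1 a2 b0 b1 : rat) : (2 <= Q)%N ->
  \sum_(0 <= d < Q.+1)
     (a0 + a1 * d%:R + a2 * d%:R ^+ 2 + (-1) ^+ d * (b0 + b1 * d%:R)) * binq Q d
  = (a0 + a1 * Q%:R / 2 + a2 * Q%:R * (Q%:R + 1) / 4) * 2 ^+ Q.
Proof.
move=> Q_ge2.
transitivity (a0 * moment 0 Q + a1 * moment 1 Q + a2 * moment 2 Q
              + b0 * alt_moment 0 Q + b1 * alt_moment 1 Q).
  rewrite /moment /alt_moment !big_distrr -!big_split /=.
  by apply: eq_bigr => d _; ring.
case: Q Q_ge2 => [|[|Q]] // _.
by case: (moment_closed Q.+2) => -> -> ->; rewrite alt_moment1 alt_moment0; field.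
Qed.

Lemma sign_even l : (-1) ^+ (2 * l)%N = 1 :> rat.
Proof. by rewrite exprM sqrrN expr1n. Qed.

Lemma sign_odd l : (-1) ^+ (2 * l).+1 = -1 :> rat.
Proof. by rewrite exprS sign_even mulr1. Qed.

(* The three sums over [i] left by step 2.  Each is a sum over the even or
   the odd positions of row [2p+3], i.e. a row sum against a weight of the
   form of [sum_quadratic_binq]. *)

Lemma row_sum_odd p : \sum_(1 <= i < p.+1) i%:R * binq (2 * p + 3) (2 * i + 1)
  = (2 * p%:R + 1) * 2 ^+ (2 * p) - p%:R - 1.
Proof.
rewrite sum_from1 (@sum_by_pairs _ (fun d => (-1/4 + 1/4 * d%:R + 0 * d%:R ^+ 2
            + (-1) ^+ d * (1/4 + (-1/4) * d%:R)) * binq (2 * p + 3) d)); last first.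
  move=> l; rewrite sign_even sign_odd -natr1 natrM.
  have -> : (2 * l + 1 = (2 * l).+1)%N by lia.
  by field.
have -> : (2 * p.+2 = (2 * p + 3).+1)%N by lia.
rewrite sum_quadratic_binq; last by lia.
have -> : (2 * p.+1 + 1 = 2 * p + 3)%N by lia.
by rewrite /binq binn !natrD exprD -natr1; field.
Qed.

Lemma row_sum_even p : \sum_(1 <= i < p.+1) i%:R * binq (2 * p + 3) (2 * i + 2)
  = (2 * p%:R - 1) * 2 ^+ (2 * p) + 1.
Proof.
rewrite (@sum_from1_shift _ _ (fun l => (l%:R - 1) * binq (2 * p + 3) (2 * l))); last first.
  move=> l /=; rewrite -natr1.
  have -> : (2 * l.+2 = 2 * l.+1 + 2)%N by lia.
  ring.
rewrite (@sum_by_pairs _ (fun d => (-1/2 + 1/4 * d%:R + 0 * d%:R ^+ 2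
            + (-1) ^+ d * (-1/2 + 1/4 * d%:R)) * binq (2 * p + 3) d)); last first.
  by move=> l; rewrite sign_even sign_odd -natr1 natrM; field.
have -> : (2 * p.+2 = (2 * p + 3).+1)%N by lia.
rewrite sum_quadratic_binq; last by lia.
by rewrite /binq muln0 bin0 !natrD exprD; field.
Qed.

(* The tail sum is first turned into a sum of binomial coefficients by Abel
   summation, as consecutive tails differ by two coefficients. *)
Lemma row_sum_tail p : \sum_(1 <= i < p.+1) i%:R * btail (2 * p + 3) (2 * i + 2)
  = p%:R * (2 * p%:R + 1) * 2 ^+ (2 * p) / 2.
Proof.
rewrite (abel_summation (fun i => btail (2 * p + 3) (2 * i + 2))) //=.
rewrite (@btail_gt (2 * p + 3) (2 * p.+1 + 2)) ?mulr0 ?addr0; last by lia.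
have tail_diff i : btail (2 * p + 3) (2 * i + 2) - btail (2 * p + 3) (2 * i.+1 + 2)
    = binq (2 * p + 3) (2 * i + 2) + binq (2 * p + 3) (2 * i + 3).
  rewrite (@btail_splitE _ _ (2 * i + 3)) ?(@btail_splitE _ (2 * i + 3) (2 * i.+1 + 2));
    try lia.
  ring.
under eq_bigr => i _ do rewrite tail_diff.
rewrite (@sum_from1_shift _ _ (fun l => (l%:R * (l%:R - 1) / 2)
            * (binq (2 * p + 3) (2 * l) + binq (2 * p + 3) (2 * l).+1))); last first.
  move=> l /=; rewrite -!natr1.
  have -> : (2 * l.+2 = 2 * l.+1 + 2)%N by lia.
  have -> : ((2 * l.+1 + 2).+1 = 2 * l.+1 + 3)%N by lia.
  by field.
rewrite (@sum_by_pairs _ (fun d => (3/16 + (-6/16) * d%:R + 2/16 * d%:R ^+ 2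
            + (-1) ^+ d * (-3/16 + 2/16 * d%:R)) * binq (2 * p + 3) d)); last first.
  by move=> l; rewrite sign_even sign_odd -natr1 natrM; field.
have -> : (2 * p.+2 = (2 * p + 3).+1)%N by lia.
rewrite sum_quadratic_binq; last by lia.
by rewrite /binq muln0 bin0 !natrD exprD; field.
Qed.

Theorem lemma14 (n p : nat) : h n p = 0%R.
Proof.
rewrite /h /=.
rewrite (eq_big_nat _ _ (fun i (i_range : (1 <= i < p.+1)%N) => inner_sum_to_2p n _ i_range)).
rewrite (eq_bigr _ (fun i _ => inner_sum_to_n n p i _)) !big_distrr /=.
have regroup (X A B C : rat) : X + A + B + C = X + (A + B + C) by ring.
rewrite regroup -!big_split /= (eq_bigr _ (fun i _ => summand_to_row n p i)).
rewrite !big_split /= -!big_distrr /= row_sum_odd row_sum_tail row_sum_even.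
rewrite pow2_1ab !pow2_1a.
have := exp2_neq0 n; have := exp2_neq0 (2 * p); have := denom_neq0 n p.
by move=> M_neq0 E_neq0 F_neq0; field; rewrite M_neq0 E_neq0 F_neq0.
Qed.
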